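(* For every integer $k>4$ there exists a finite simple graph $G$ such that, defining $G_0=G$ and $G_{t+1}=P^k(G_t)$ for $t\ge 0$, we have $G_{t+1}\neq G_t$ for every $t\ge 0$. In other words, iterating $k$-intersection polishing starting from $G$ never reaches a $k$-intersection polished graph.
   Context: All graphs are finite and simple. For a vertex $v$, $N[v]$ denotes its closed neighbourhood (the set of neighbours of $v$ together with $v$). For an integer $k$, $P^k(G)$ is the graph on the same vertex set as $G$ in which two distinct vertices $u,v$ are adjacent if and only if $|N[u]\cap N[v]|\ge k$, the closed neighbourhoods being taken in $G$. A graph $G$ is called $k$-intersection polished if $P^k(G)=G$ (equality of edge sets on the same vertex set). *)

From mathcomp Require Import all_boot.
Set Implicit Arguments. Unset Strict Implicit. Unset Printing Implicit Defensive.

Definition simple_graph (T : finType) (e : rel T) : Prop :=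
  symmetric e /\ irreflexive e.

Definition closed_nbhd (T : finType) (e : rel T) (v : T) : {set T} :=
  [set u | (u == v) || e v u].

Definition polish (k : nat) (T : finType) (e : rel T) : rel T :=
  fun u v => (u != v) && (k <= #|closed_nbhd e u :&: closed_nbhd e v|).

Definition polish_iter (k : nat) (T : finType) (e : rel T) (t : nat) : rel T :=
  iter t (@polish k T) e.

Definition same_graph (T : finType) (e1 e2 : rel T) : Prop :=
  forall u v, e1 u v = e2 u v.

From mathcomp Require Import all_boot.

Set Implicit Arguments.
Unset Strict Implicit.
Unset Printing Implicit Defensive.

(* For k = 5 + a take G = C + K_a, a circulant graph C on Z_18 joined with a
   clique on a new vertices.  The clique vertices are adjacent to everything,
   so the join adds exactly a to every common closed neighbourhood; since all
   closed neighbourhoods of C have at least 5 vertices, this gives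
   P^(5+a)(C + K_a) = P^5(C) + K_a.  On Z_18, P^5 permutes the circulants with
   connection sets {5,6,7,8}, {1,2,5,6}, {1,4,6,7} cyclically, so the
   iteration is 3-periodic and never stabilises. *)

Lemma polish_ext k (T : finType) (e1 e2 : rel T) :
  e1 =2 e2 -> polish k e1 =2 polish k e2.
Proof.
move=> e12 u v; have N w : closed_nbhd e1 w = closed_nbhd e2 w.
  by apply/setP=> z; rewrite !inE e12.
by rewrite /polish !N.
Qed.

Lemma card_sum_set (T U : finType) (A : {set T + U}) :
  #|A| = #|inl @^-1: A| + #|inr @^-1: A|.
Proof.
rewrite -!sum1dep_card -sum1_card big_sumType.
by congr (_ + _); apply: eq_bigl => ?; rewrite inE.
Qed.

Section JoinComplete.

Variables (T U : finType).

Definition join_complete (e : rel T) : rel (T + U) :=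
  fun u v => match u, v with
             | inl x, inl y => e x y
             | inr i, inr j => i != j
             | _, _ => true
             end.

Lemma join_complete_ext (e1 e2 : rel T) :
  e1 =2 e2 -> join_complete e1 =2 join_complete e2.
Proof. by move=> e12 [x|i] [y|j] //=; rewrite e12. Qed.

Lemma simple_join_complete (e : rel T) :
  simple_graph e -> simple_graph (join_complete e).
Proof.
case=> sym_e irr_e; split; last by case=> [x|i] /=; rewrite ?irr_e ?eqxx.
by case=> [x|i] [y|j] //=; rewrite ?sym_e // eq_sym.
Qed.

Variable e : rel T.

Lemma closed_nbhd_join_inr (i : U) : closed_nbhd (join_complete e) (inr i) = setT.
Proof.
apply/setP=> [[x|j]]; rewrite !inE //=.
by case: (eqVneq j i) => [->|]; rewrite ?eqxx ?orbT.
Qed.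

Lemma preim_inl_closed_nbhd_join (x : T) :
  inl @^-1: closed_nbhd (join_complete e) (inl x) = closed_nbhd e x.
Proof. by apply/setP=> y; rewrite !inE. Qed.

Lemma preim_inr_closed_nbhd_join (x : T) :
  inr @^-1: closed_nbhd (join_complete e) (inl x) = setT.
Proof. by apply/setP=> j; rewrite !inE. Qed.

Lemma polish_join_complete k :
  k <= #|T| -> (forall x, k <= #|closed_nbhd e x|) ->
  polish (k + #|U|) (join_complete e) =2 join_complete (polish k e).
Proof.
move=> k_le_T k_le_nbhd u v; rewrite /polish card_sum_set !preimsetI.
case: u v => [x|i] [y|j]; rewrite ?closed_nbhd_join_inr ?preimsetT
  ?preim_inl_closed_nbhd_join ?preim_inr_closed_nbhd_join ?setIT ?setTI
  !cardsT leq_add2r ?k_le_nbhd ?k_le_T ?andbT //.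
Qed.

End JoinComplete.

Arguments join_complete {T} U e.

Lemma polish_iter_join_complete (T U : finType) k (g : nat -> rel T) :
  k <= #|T| -> (forall t x, k <= #|closed_nbhd (g t) x|) ->
  (forall t, polish k (g t) =2 g t.+1) ->
  forall t, polish_iter (k + #|U|) (join_complete U (g 0)) t =2 join_complete U (g t).
Proof.
move=> k_le_T k_le_nbhd polish_g; elim=> [|t IH] //= u v.
rewrite (polish_ext _ IH) polish_join_complete //; exact: join_complete_ext.
Qed.

(* Graphs on 'I_n are given by relations on nat, so that concrete instances
   can be checked by evaluating lists of naturals: evaluating the enumeration
   of 'I_n itself is impractically slow. *)
Definition rel_ord n (r : rel nat) : rel 'I_n := fun x y => r x y.
Arguments rel_ord : clear implicits.

Lemma card_ord_pred n (p : pred nat) : #|[set x : 'I_n | p x]| = count p (iota 0 n).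
Proof.
rewrite cardE /enum_mem size_filter -val_enum_ord count_map -enumT.
by apply: eq_count => x /=; rewrite inE.
Qed.

Lemma all_ordP n (p : pred nat) : reflect (forall x : 'I_n, p x) (all p (iota 0 n)).
Proof.
apply: (iffP allP) => [H x | H x]; first by apply: H; rewrite mem_iota /=.
by rewrite mem_iota => /= x_lt_n; exact: (H (Ordinal x_lt_n)).
Qed.

Lemma eq_rel_ordP n (r1 r2 : rel nat) :
  reflect (rel_ord n r1 =2 rel_ord n r2)
          (all (fun x => all (fun y => r1 x y == r2 x y) (iota 0 n)) (iota 0 n)).
Proof.
apply: (iffP (all_ordP _ _)) => H x => [y|]; first by have /all_ordP/(_ y)/eqP := H x.
by apply/all_ordP=> y; apply/eqP; exact: H.
Qed.

Lemma simple_rel_ord n (r : rel nat) :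
  symmetric r -> irreflexive r -> simple_graph (rel_ord n r).
Proof. by move=> sym_r irr_r; split=> [x y | x]; [exact: sym_r | exact: irr_r]. Qed.

Definition polish_nat k n (r : rel nat) : rel nat := fun x y =>
  (x != y) && (k <= count (fun w => ((w == x) || r x w) && ((w == y) || r y w)) (iota 0 n)).

Lemma polish_rel_ord k n r : polish k (rel_ord n r) =2 rel_ord n (polish_nat k n r).
Proof.
move=> x y; rewrite /polish /rel_ord /polish_nat -card_ord_pred.
by congr (_ && (_ <= #|pred_of_set _|)); apply/setP=> w; rewrite !inE.
Qed.

Lemma card_closed_nbhd_rel_ord_ge k n r :
  all (fun x => k <= count (fun w => (w == x) || r x w) (iota 0 n)) (iota 0 n) ->
  forall x : 'I_n, k <= #|closed_nbhd (rel_ord n r) x|.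
Proof.
move=> /all_ordP k_le x; rewrite (leq_trans (k_le x)) // -card_ord_pred.
by apply/eq_leq/eq_card=> w; rewrite !inE.
Qed.

Definition circ_dist n (x y : nat) : nat :=
  let d := maxn x y - minn x y in minn d (n - d).

Definition circulant n (S : seq nat) : rel 'I_n :=
  rel_ord n (fun x y => circ_dist n x y \in S).
Arguments circulant : clear implicits.

Lemma simple_circulant n S : 0 \notin S -> simple_graph (circulant n S).
Proof.
move=> S_0; apply: simple_rel_ord => [x y | x].
  by rewrite /circ_dist /= (maxnC y) (minnC y).
by rewrite /circ_dist /= (maxnn x) (minnn x) subnn min0n (negbTE S_0).
Qed.

Definition conn (t : nat) : seq nat :=
  nth [::] [:: [:: 5; 6; 7; 8]; [:: 1; 2; 5; 6]; [:: 1; 4; 6; 7]] (t %% 3).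

Lemma conn_step t :
  (conn t, conn t.+1) \in [:: (conn 0, conn 1); (conn 1, conn 2); (conn 2, conn 0)].
Proof.
rewrite [conn t]/conn [conn t.+1]/conn -[t.+1]addn1 -modnDml.
by case: (t %% 3) (ltn_pmod t (isT : 0 < 3)) => [|[|[|]]].
Qed.

Lemma polish_circulant_conn t :
  polish 5 (circulant 18 (conn t)) =2 circulant 18 (conn t.+1).
Proof.
move=> x y; rewrite polish_rel_ord; move: x y; apply/eq_rel_ordP.
by have := conn_step t; rewrite !inE => /or3P [] /eqP [-> ->]; vm_compute.
Qed.

Lemma card_closed_nbhd_circulant_conn t x :
  5 <= #|closed_nbhd (circulant 18 (conn t)) x|.
Proof.
apply: card_closed_nbhd_rel_ord_ge.
by have := conn_step t; rewrite !inE => /or3P [] /eqP [-> _]; vm_compute.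
Qed.

Lemma circulant_conn_changes t : ~ circulant 18 (conn t.+1) =2 circulant 18 (conn t).
Proof.
move/eq_rel_ordP; apply/negP.
by have := conn_step t; rewrite !inE => /or3P [] /eqP [-> ->]; vm_compute.
Qed.

Theorem theorem2 : forall k : nat, 4 < k ->
  exists (T : finType) (e : rel T),
    simple_graph e /\
    forall t : nat,
      ~ same_graph (polish_iter k e t.+1) (polish_iter k e t).
Proof.
move=> k k_gt4; pose U := 'I_(k - 5).
have -> : k = 5 + #|U| by rewrite card_ord subnKC.
exists ('I_18 + U)%type, (join_complete U (circulant 18 (conn 0))); split.
  exact/simple_join_complete/simple_circulant.
have five_le_18 : 5 <= #|'I_18| by rewrite card_ord.
have iterE := polish_iter_join_complete (U := U) five_le_18
  card_closed_nbhd_circulant_conn polish_circulant_conn.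
move=> t same; case: (@circulant_conn_changes t) => x y.
by have := same (inl x) (inl y); rewrite !iterE.
Qed.
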